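(* For every $m\ge1$ and every probability mass function $(g_k)_{k\in\mathbb Z}$ of a sum of $m$ independent Bernoulli random variables (extended by $0$ outside $\{0,\ldots,m\}$), $$g_{k-1}g_k^2-2g_{k-1}^2g_{k+1}+g_kg_{k+1}g_{k-2}\ge0\quad\text{for all }k\in\mathbb Z.$$ *)

From HB Require Import structures.
From mathcomp Require Import all_boot all_order all_algebra.
Set Implicit Arguments. Unset Strict Implicit. Unset Printing Implicit Defensive.
Import Order.TTheory GRing.Theory Num.Theory.
Local Open Scope ring_scope.

(* Probability mass function of S = X_1 + ... + X_m, X_i independent
   Bernoulli(p i), computed on the product space {0,1}^m:
   P(S = k) = sum over outcomes x with #{i | x i} = k of
              prod_i (p i if x i else 1 - p i).
   For k outside {0,...,m} the sum is empty, so the value is 0. *)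
Definition poibin_pmf (R : nzRingType) (m : nat) (p : 'I_m -> R) (k : int) : R :=
  \sum_(x : {ffun 'I_m -> bool} | (#|[set i | x i]|%:Z == k))
     \prod_(i < m) (if x i then p i else 1 - p i).

(* Write g = poibin_pmf p.  Its generating polynomial is
   \prod_i ((1 - p i) + p i X), so g is obtained from the unit sequence
   (1 at 0, 0 elsewhere) by m successive Bernoulli convolutions
   h |-> q h(k) + p h(k-1) with q = 1 - p, 0 <= p <= 1.  The claimed
   expression is the cubic form cubic_at g k, and we prove that the
   following property tp2_cubic is preserved by every such convolution:
     (i)   h >= 0,
     (ii)  h(i) h(j) >= h(i-1) h(j+1) whenever i <= j (order-2 total
           positivity, i.e. log-concavity in its long-range form),
     (iii) cubic_at h k >= 0 for every k.
   Preservation of (ii) follows from a bilinear identity for the 2x2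
   minors.  Preservation of (iii) is a purely algebraic fact about five
   consecutive nonnegative values a, b, c, d, f (cubic_mix_ge0): the
   convolved cubic is a cubic polynomial in (q, p) whose four coefficients
   are nonnegative by (ii) and (iii).  The unit sequence has the property,
   hence so does g, which is the theorem. *)
From HB Require Import structures.
From mathcomp Require Import all_boot all_order all_algebra.
From mathcomp Require Import zify ring.
Import Order.TTheory GRing.Theory Num.Theory.
Set Implicit Arguments. Unset Strict Implicit. Unset Printing Implicit Defensive.
Local Open Scope ring_scope.

Ltac nonneg := repeat first
  [ assumption | apply: addr_ge0 | apply: mulr_ge0 | apply: exprn_ge0
  | apply: sqr_ge0 | apply: ler0n ].

Section CubicForm.
Variable R : realFieldType.
Implicit Types a b c d f q p : R.

(* The cubic form of the theorem, on four consecutive values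
   b = h(k-2), c = h(k-1), d = h(k), f = h(k+1). *)
Definition cubic b c d f : R := c * d ^+ 2 - 2%:R * c ^+ 2 * f + d * f * b.

Section Window.
Variables a b c d f : R.
Hypotheses (a0 : 0 <= a) (b0 : 0 <= b) (c0 : 0 <= c) (d0 : 0 <= d) (f0 : 0 <= f).
Hypotheses (cubic_bcdf : 0 <= cubic b c d f) (cubic_abcd : 0 <= cubic a b c d).
Hypotheses (lc_cc : 0 <= c ^+ 2 - b * d) (lc_cd : 0 <= c * d - b * f)
  (lc_dd : 0 <= d ^+ 2 - c * f).

(* The coefficients of q^2 p and q p^2 in the convolved cubic form. *)
Let mixed1 := 2%:R * b * d ^+ 2 - 3%:R * b * c * f + a * d * f.
Let mixed2 := c ^+ 3 - b * c * d - 2%:R * b ^+ 2 * f + a * d ^+ 2 + a * c * f.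

(* If c > 0, c * mixed1 is a nonnegative combination of the two cubic forms. *)
Lemma mixed1_ge0 : 0 <= mixed1.
Proof.
have [c_eq0|cn0] := eqVneq c 0.
  by rewrite /mixed1 c_eq0 mulr0 mul0r subr0; nonneg.
have c_gt0 : 0 < c by rewrite lt_def cn0.
rewrite -(pmulr_rge0 _ c_gt0).
have -> : c * mixed1 = 2%:R * b * cubic b c d f + f * cubic a b c d.
  by rewrite /mixed1 /cubic; ring.
by nonneg.
Qed.

(* If c, d > 0, c^2 d^2 * mixed2 is a nonnegative combination of the cubic
   forms and of the minor c^2 - b d; the degenerate cases c = 0 or d = 0
   force b f = 0, resp. f = 0, by the other two minors. *)
Lemma mixed2_ge0 : 0 <= mixed2.
Proof.
have [c_eq0|cn0] := eqVneq c 0.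
  have bf0 : b * f = 0.
    move: lc_cd; rewrite c_eq0 mul0r sub0r oppr_ge0 => bf_le0.
    by apply/eqP; rewrite eq_le bf_le0 mulr_ge0.
  have -> : mixed2 = a * d ^+ 2 - 2%:R * b * (b * f) by rewrite /mixed2 c_eq0; ring.
  by rewrite bf0 mulr0 subr0; nonneg.
have c_gt0 : 0 < c by rewrite lt_def cn0.
have [d_eq0|dn0] := eqVneq d 0.
  have f_eq0 : f = 0.
    move: lc_dd; rewrite d_eq0 expr0n sub0r oppr_ge0 => cf_le0.
    apply/eqP; rewrite -(mulrI_eq0 _ (lregP cn0)).
    by rewrite eq_le cf_le0 mulr_ge0.
  by rewrite /mixed2 d_eq0 f_eq0 !(mulr0, mul0r, subr0, addr0, expr0n) /=; nonneg.
have d_gt0 : 0 < d by rewrite lt_def dn0.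
rewrite -(pmulr_rge0 _ (mulr_gt0 (exprn_gt0 2 c_gt0) (exprn_gt0 2 d_gt0))).
have -> : c ^+ 2 * d ^+ 2 * mixed2
    = ((c ^+ 2 - b * d) ^+ 2 + (b * d) ^+ 2) * cubic b c d f
      + (c * d ^+ 3 + c ^+ 2 * d * f) * cubic a b c d
      + 2%:R * f * (c ^+ 2 - b * d) ^+ 3.
  by rewrite /mixed2 /cubic; ring.
by nonneg.
Qed.

(* Key algebraic step: the cubic form of the Bernoulli-convolved window is a
   cubic polynomial in (q, p) with nonnegative coefficients. *)
Lemma cubic_mix_ge0 q p : 0 <= q -> 0 <= p ->
  0 <= cubic (q * b + p * a) (q * c + p * b) (q * d + p * c) (q * f + p * d).
Proof.
move=> q0 p0.
have -> : cubic (q * b + p * a) (q * c + p * b) (q * d + p * c) (q * f + p * d)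
    = q ^+ 3 * cubic b c d f + q ^+ 2 * p * mixed1 + q * p ^+ 2 * mixed2
      + p ^+ 3 * cubic a b c d.
  by rewrite /cubic /mixed1 /mixed2; ring.
by have m1 := mixed1_ge0; have m2 := mixed2_ge0; nonneg.
Qed.

End Window.
End CubicForm.

Section Sequences.
Variable R : realFieldType.
Implicit Types (h : int -> R) (q p : R) (i j k : int).

Definition bconv q p h k : R := q * h k + p * h (k - 1).

Definition minor2 h i j : R := h i * h j - h (i - 1) * h (j + 1).

Definition cubic_at h k : R := cubic (h (k - 1 - 1)) (h (k - 1)) (h k) (h (k + 1)).

Definition tp2_cubic h : Prop :=
  [/\ forall k, 0 <= h k,
      forall i j, i <= j -> 0 <= minor2 h i j
    & forall k, 0 <= cubic_at h k].

Lemma minor2_bconv q p h i j : minor2 (bconv q p h) i j =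
  q ^+ 2 * minor2 h i j + q * p * (minor2 h i (j - 1) + minor2 h (i - 1) j)
  + p ^+ 2 * minor2 h (i - 1) (j - 1).
Proof. by rewrite /minor2 /bconv addrK subrK; ring. Qed.

(* The one minor with i > j appearing in minor2_bconv vanishes trivially. *)
Lemma minor2_diag_pred h i : minor2 h i (i - 1) = 0.
Proof. by rewrite /minor2 subrK mulrC subrr. Qed.

Lemma tp2_cubic_bconv q p h : 0 <= q -> 0 <= p -> tp2_cubic h -> tp2_cubic (bconv q p h).
Proof.
move=> q0 p0 [h0 hm hc]; split.
- by move=> k; rewrite /bconv; nonneg.
- move=> i j le_ij; rewrite minor2_bconv.
  have m_ij1 : 0 <= minor2 h i (j - 1).
    have [->|ne_ij] := eqVneq i j; first by rewrite minor2_diag_pred.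
    by apply: hm; lia.
  have m_i1j : 0 <= minor2 h (i - 1) j by apply: hm; lia.
  have m_i1j1 : 0 <= minor2 h (i - 1) (j - 1) by apply: hm; lia.
  by have m_ij := hm i j le_ij; nonneg.
- move=> k; rewrite /cubic_at /bconv !addrK.
  have lc_cc := hm (k - 1) (k - 1) (lexx _).
  have lc_cd : 0 <= minor2 h (k - 1) k by apply: hm; lia.
  have lc_dd := hm k k (lexx _).
  have cubic_prev := hc (k - 1).
  rewrite /minor2 ?subrK -?expr2 in lc_cc lc_cd lc_dd.
  rewrite /cubic_at subrK in cubic_prev.
  exact: (cubic_mix_ge0 (h0 _) (h0 _) (h0 _) (h0 _) (h0 _) (hc k) cubic_prev
    lc_cc lc_cd lc_dd q0 p0).
Qed.

Lemma eq_tp2_cubic h h' : h =1 h' -> tp2_cubic h -> tp2_cubic h'.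
Proof.
move=> eq_h [h0 hm hc]; split=> [k | i j /hm | k]; rewrite /minor2 /cubic_at -!eq_h //.
exact: hc.
Qed.
End Sequences.

Section Coefficients.
Variable R : realFieldType.
Implicit Types (P : {poly R}) (k : int).

Definition coefz P k : R := if k is Posz n then P`_n else 0.

Lemma coefz1 k : coefz 1 k = if k == 0 then 1 else 0.
Proof. by case: k => [[|n]|n] //=; rewrite coef1. Qed.

Lemma coefz1_mul_neq i j : i != j -> coefz 1 i * coefz 1 j = 0.
Proof.
move=> ne_ij; rewrite !coefz1.
have [i0|] := eqVneq i 0; last by rewrite mul0r.
by move: ne_ij; rewrite i0 eq_sym => /negPf ->; rewrite mulr0.
Qed.

(* Base case: the unit sequence satisfies the invariant, every product
   of two values at distinct indices being 0. *)
Lemma tp2_cubic_coefz1 : tp2_cubic (coefz (1 : {poly R})).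
Proof.
split.
- by move=> k; rewrite coefz1; case: ifP.
- move=> i j le_ij; rewrite /minor2 (@coefz1_mul_neq (i - 1)) ?subr0; last by apply/eqP; lia.
  by rewrite !coefz1; case: ifP; case: ifP; rewrite ?(mulr0, mul0r, mulr1).
- move=> k; rewrite /cubic_at.
  set b := coefz 1 _; set c := coefz 1 (k - 1); set d := coefz 1 k; set f := coefz 1 (k + 1).
  have -> : cubic b c d f = c * d * d - 2%:R * c * (c * f) + d * f * b.
    by rewrite /cubic; ring.
  by rewrite /c /d /f !coefz1_mul_neq ?(mul0r, mulr0, subrr, addr0) //; apply/eqP; lia.
Qed.

Lemma coefz_mul_affine P a b k :
  coefz (P * (a%:P + b *: 'X)) k = bconv a b (coefz P) k.
Proof.
case: k => [[|n]|n]; rewrite /bconv /= ?mulr0 ?addr0 //.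
all: rewrite mulrDr coefD mulrC mul_polyC coefZ -scalerAr coefZ coefMX /=.
  by rewrite mulr0 addr0.
by rewrite subn1.
Qed.

Lemma tp2_cubic_prod (m : nat) (p : 'I_m -> R) : (forall i, 0 <= p i <= 1) ->
  tp2_cubic (coefz (\prod_(i < m) ((1 - p i)%:P + p i *: 'X))).
Proof.
elim: m p => [|m IH] p hp; first by rewrite big_ord0; exact: tp2_cubic_coefz1.
have /andP [p0 p1] := hp ord_max.
rewrite big_ord_recr /=; apply: eq_tp2_cubic (fun k => esym (coefz_mul_affine _ _ _ k)) _.
by apply: tp2_cubic_bconv (IH _ (fun i => hp _)); rewrite ?subr_ge0.
Qed.

Lemma prod_affine_expand (m : nat) (p : 'I_m -> R) :
  \prod_(i < m) ((1 - p i)%:P + p i *: 'X) =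
  \sum_(x : {ffun 'I_m -> bool})
     (\prod_(i < m) (if x i then p i else 1 - p i)) *: 'X^#|[set i | x i]|.
Proof.
pose F (i : 'I_m) (b : bool) : {poly R} :=
  (if b then p i else 1 - p i) *: (if b then 'X else 1).
have -> : \prod_(i < m) ((1 - p i)%:P + p i *: 'X) = \prod_(i < m) \sum_(b : bool) F i b.
  by apply: eq_bigr => i _; rewrite big_bool /F -alg_polyC addrC.
rewrite bigA_distr_bigA /=; apply: eq_bigr => x _.
rewrite /F scaler_prod -big_mkcond prodr_const; congr (_ *: _ ^+ _).
by apply: eq_card => i; rewrite inE.
Qed.

Lemma poibin_pmf_coefz (m : nat) (p : 'I_m -> R) :
  poibin_pmf p =1 coefz (\prod_(i < m) ((1 - p i)%:P + p i *: 'X)).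
Proof.
rewrite prod_affine_expand /poibin_pmf => -[n|n] /=; last by rewrite big1.
rewrite coef_sum big_mkcond; apply: eq_bigr => x _.
by rewrite coefZ coefXn eqz_nat eq_sym; case: eqP; rewrite ?mulr1 ?mulr0.
Qed.
End Coefficients.

Theorem theoremA2 (R : realFieldType) (m : nat) (p : 'I_m -> R)
  (hm : (1 <= m)%N) (hp : forall i, 0 <= p i <= 1) (k : int) :
  let g := poibin_pmf p in
  0 <= g (k - 1) * g k ^+ 2 - 2%:R * g (k - 1) ^+ 2 * g (k + 1)
       + g k * g (k + 1) * g (k - 2).
Proof.
have [_ _ cubic_ge0] :=
  eq_tp2_cubic (fun k => esym (poibin_pmf_coefz p k)) (tp2_cubic_prod hp).
by have := cubic_ge0 k; rewrite /cubic_at /cubic (_ : k - 1 - 1 = k - 2) //; lia.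
Qed.
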